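(* Let $0<q<1$ and define the positive measure $\mu$ on $\mathbb C$ by $$\int_{\mathbb C} f\,d\mu=\sum_{k=0}^\infty\frac{q^k}{(q;q)_k}\,\frac{1}{2\pi}\int_0^{2\pi}f\big(q^{k/2}e^{i\theta}\big)\,d\theta .$$ Then for all $m,n,s,t\in\mathbb N_0$, $$\int_{\mathbb C}H_{m,n}(z,\bar z|q)\,\overline{H_{s,t}(z,\bar z|q)}\,d\mu(z)=\frac{q^{mn}(q;q)_m(q;q)_n}{(q;q)_\infty}\,\delta_{m,s}\delta_{n,t}.$$
   Context: $(a;q)_n=\prod_{j=0}^{n-1}(1-aq^j)$, $(a;q)_\infty=\prod_{j\ge0}(1-aq^j)$, $\left[{m\atop k}\right]_q=\frac{(q;q)_m}{(q;q)_k(q;q)_{m-k}}$, $m\wedge n=\min\{m,n\}$. The first $q$-$2D$-Hermite polynomials are $$H_{m,n}(z_1,z_2|q)=\sum_{k=0}^{m\wedge n}\left[{m\atop k}\right]_q\left[{n\atop k}\right]_q(-1)^kq^{\binom k2}(q;q)_k\,z_1^{m-k}z_2^{n-k},$$ and $H_{m,n}(z,\bar z|q)$ denotes this polynomial evaluated at $z_1=z$, $z_2=\bar z$. *)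

From Stdlib Require Import Reals.
Open Scope R_scope.

(* Complex numbers as pairs (real part, imaginary part). *)
Definition C : Type := (R * R)%type.
Definition Cadd (z w : C) : C := (fst z + fst w, snd z + snd w).
Definition Cmul (z w : C) : C :=
  (fst z * fst w - snd z * snd w, fst z * snd w + snd z * fst w).
Definition Cconj (z : C) : C := (fst z, - snd z).
Definition Cscale (r : R) (z : C) : C := (r * fst z, r * snd z).
Fixpoint Cpow (z : C) (n : nat) : C :=
  match n with O => (1, 0) | S n' => Cmul z (Cpow z n') end.
Fixpoint Csum (f : nat -> C) (n : nat) : C :=
  match n with O => f O | S n' => Cadd (Csum f n') (f n) end.

Fixpoint qpoch (a q : R) (n : nat) : R :=
  match n with O => 1 | S n' => qpoch a q n' * (1 - a * q ^ n') end.

Definition qbin (q : R) (m k : nat) : R :=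
  qpoch q q m / (qpoch q q k * qpoch q q (m - k)).

Definition binom2 (k : nat) : nat := (k * (k - 1) / 2)%nat.

Definition qHermite2D (q : R) (m n : nat) (z1 z2 : C) : C :=
  Csum (fun k => Cscale (qbin q m k * qbin q n k * (-1) ^ k * q ^ (binom2 k)
                          * qpoch q q k)
                        (Cmul (Cpow z1 (m - k)) (Cpow z2 (n - k))))
       (Nat.min m n).

Definition zpt (q : R) (k : nat) (theta : R) : C :=
  (Rpower q (INR k / 2) * cos theta, Rpower q (INR k / 2) * sin theta).

Definition angular_mean (f : R -> C) (v : C) : Prop :=
  exists (pre : Riemann_integrable (fun t => fst (f t)) 0 (2 * PI))
         (pim : Riemann_integrable (fun t => snd (f t)) 0 (2 * PI)),
    v = (RiemannInt pre / (2 * PI), RiemannInt pim / (2 * PI)).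

Definition qpoch_inf (q l : R) : Prop := Un_cv (fun n => qpoch q q n) l.

Definition mu_integral (q : R) (f : C -> C) (v : C) : Prop :=
  exists a : nat -> C,
    (forall k, angular_mean (fun theta => f (zpt q k theta)) (a k)) /\
    infinite_sum (fun k => q ^ k / qpoch q q k * fst (a k)) (fst v) /\
    infinite_sum (fun k => q ^ k / qpoch q q k * snd (a k)) (snd v).

Definition kron (i j : nat) : R := if Nat.eqb i j then 1 else 0.

(* In polar coordinates [z = r e^(i th)] one has [H_{m,n}(z, conj z) = h_{m,n}(r) e^(i(m-n) th)],
   so the angular average vanishes unless [m - n = s - t].  In that case the radial series
   [sum_k q^k/(q;q)_k h_{m,n}(q^(k/2)) h_{s,t}(q^(k/2))] splits into q-exponentials
   [e_q(q^(N+1)) = (q;q)_N e_q(q)], where [e_q(x) = sum_k x^k/(q;q)_k] and [e_q(q) = 1/(q;q)_oo],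
   leaving the finite sum [sum_{i,j} c_i c'_j (q;q)_{m+t-i-j}].  Summing over [i] first,
   [(q;q)_{m+b-i}] is [(q;q)_m] times a polynomial of degree [b] in [q^-i], and the alternating
   sum [sum_i [n,i]_q (-1)^i q^(i(i-1)/2) P(q^-i)] vanishes when [deg P < n] (q-binomial
   theorem at [x = q^-c]); only the diagonal [b = n] survives. *)

From Stdlib Require Import Reals Lra Lia FunctionalExtensionality.
From Coquelicot Require Import Coquelicot.
Open Scope R_scope.

Lemma sum_f_R0_swap (f : nat -> nat -> R) (M N : nat) :
  sum_f_R0 (fun i => sum_f_R0 (fun j => f i j) N) M =
  sum_f_R0 (fun j => sum_f_R0 (fun i => f i j) M) N.
Proof.
  transitivity (sum_n (fun i => sum_n (fun j => f i j) N) M).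
  - rewrite sum_n_Reals. apply sum_eq. intros i _. symmetry. apply sum_n_Reals.
  - rewrite sum_n_switch, sum_n_Reals. apply sum_eq. intros j _. apply sum_n_Reals.
Qed.

Lemma sum_f_R0_mul (f g : nat -> R) (M N : nat) :
  sum_f_R0 f M * sum_f_R0 g N = sum_f_R0 (fun i => sum_f_R0 (fun j => f i * g j) N) M.
Proof.
  rewrite Rmult_comm, scal_sum. apply sum_eq. intros i _.
  rewrite scal_sum. apply sum_eq. intros j _. ring.
Qed.

Lemma sum_f_R0_extend (f : nat -> R) (m n : nat) : (m <= n)%nat ->
  (forall i, (m < i <= n)%nat -> f i = 0) -> sum_f_R0 f n = sum_f_R0 f m.
Proof.
  induction n as [|n IHn]; intros hmn hf.
  - now replace m with 0%nat by lia.
  - destruct (Nat.eq_dec m (S n)) as [->|hne]; [reflexivity|].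
    simpl. rewrite (hf (S n)) by lia. rewrite IHn by (lia || intros i hi; apply hf; lia). ring.
Qed.

Lemma is_series_sum_f_R0 (a : nat -> nat -> R) (l : nat -> R) (N : nat) :
  (forall i, (i <= N)%nat -> is_series (a i) (l i)) ->
  is_series (fun k => sum_f_R0 (fun i => a i k) N) (sum_f_R0 l N).
Proof.
  induction N as [|N IHN]; intros h; simpl.
  - apply h. lia.
  - apply (is_series_plus (fun k => sum_f_R0 (fun i => a i k) N) (a (S N))).
    + apply IHN. intros i hi. apply h. lia.
    + apply h. lia.
Qed.

Lemma qpoch_S_front (a p : R) (n : nat) : qpoch a p (S n) = (1 - a) * qpoch (p * a) p n.
Proof.
  induction n as [|n IHn]; simpl in *; [ring|].
  rewrite IHn. ring.
Qed.

Lemma qpoch_add (a p : R) (N b : nat) : qpoch a p (N + b) = qpoch a p N * qpoch (a * p ^ N) p b.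
Proof.
  induction b as [|b IHb].
  - rewrite Nat.add_0_r. simpl. ring.
  - rewrite Nat.add_succ_r. simpl. rewrite IHb, pow_add. ring.
Qed.

Lemma qpoch_root (a p : R) (n j : nat) : (j < n)%nat -> a * p ^ j = 1 -> qpoch a p n = 0.
Proof.
  induction n as [|n IHn]; intros hj ha; [lia|]. simpl.
  destruct (Nat.eq_dec j n) as [->|hne].
  - rewrite ha. ring.
  - rewrite IHn by (auto; lia). ring.
Qed.

Lemma pow_in_01 (x : R) (n : nat) : 0 <= x <= 1 -> 0 <= x ^ n <= 1.
Proof.
  intros hx. split; [apply pow_le; lra|].
  rewrite <- (pow1 n). apply pow_incr. lra.
Qed.

Lemma qpoch_pos (a p : R) (n : nat) : 0 <= a < 1 -> 0 <= p <= 1 -> 0 < qpoch a p n.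
Proof.
  intros ha hp. induction n as [|n IHn]; simpl; [lra|].
  assert (h := pow_in_01 p n hp).
  apply Rmult_lt_0_compat; [assumption | nra].
Qed.

Lemma binom2_S (i : nat) : binom2 (S i) = (binom2 i + i)%nat.
Proof.
  unfold binom2. replace (S i * (S i - 1))%nat with (i * (i - 1) + i * 2)%nat.
  - rewrite Nat.div_add by lia. reflexivity.
  - destruct i; simpl; lia.
Qed.

Section QCalculus.
Variable q : R.
Hypothesis hq0 : 0 < q.
Hypothesis hq1 : q < 1.

Lemma qpoch_q_pos (n : nat) : 0 < qpoch q q n.
Proof. apply qpoch_pos; lra. Qed.

Lemma qpow_pos_le1 (n : nat) : 0 < q ^ n <= 1.
Proof. split; [apply pow_lt; lra | apply pow_in_01; lra]. Qed.

Lemma qpow_Sn_in_01 (n : nat) : 0 < q ^ S n < 1.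
Proof. assert (h := qpow_pos_le1 n). simpl. split; nra. Qed.

Lemma qpow_qinv (n : nat) : q ^ n * (/ q) ^ n = 1.
Proof. rewrite <- Rpow_mult_distr, Rinv_r by lra. apply pow1. Qed.

(* Unlike [qbin], which uses truncated subtraction, [qbinom n k] is [0] for [k > n]. *)
Fixpoint qbinom (n k : nat) : R :=
  match n, k with
  | O, O => 1
  | O, S _ => 0
  | S _, O => 1
  | S n', S k' => q ^ S k' * qbinom n' (S k') + qbinom n' k'
  end.

Lemma qbinom_gt (n k : nat) : (n < k)%nat -> qbinom n k = 0.
Proof.
  revert k; induction n as [|n IHn]; intros [|k] h; simpl; try lia; auto.
  rewrite !IHn by lia. ring.
Qed.

Lemma qbinom_n0 (n : nat) : qbinom n 0 = 1.
Proof. now destruct n. Qed.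

Lemma qbin_0 (n : nat) : qbin q n 0 = 1.
Proof.
  unfold qbin. rewrite Nat.sub_0_r. simpl.
  assert (h := qpoch_q_pos n). field. lra.
Qed.

Lemma qbin_diag (n : nat) : qbin q n n = 1.
Proof.
  unfold qbin. rewrite Nat.sub_diag. simpl.
  assert (h := qpoch_q_pos n). field. lra.
Qed.

Lemma qbinom_qbin (n k : nat) : (k <= n)%nat -> qbinom n k = qbin q n k.
Proof.
  revert k; induction n as [|n IHn]; intros [|k] h.
  - simpl. now rewrite qbin_0.
  - lia.
  - simpl. now rewrite qbin_0.
  - simpl qbinom. destruct (Nat.eq_dec k n) as [->|hk].
    + rewrite qbinom_gt, IHn, !qbin_diag by lia. ring.
    + rewrite !IHn by lia. unfold qbin.
      replace (S n - S k)%nat with (S (n - S k)) by lia.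
      replace (n - k)%nat with (S (n - S k)) by lia.
      assert (e : q ^ (n - S k) * q ^ S k = q ^ n) by (rewrite <- pow_add; f_equal; lia).
      simpl in e |- *. rewrite <- e.
      assert (h1 := qpoch_q_pos n). assert (h2 := qpoch_q_pos k).
      assert (h3 := qpoch_q_pos (n - S k)).
      assert (h4 := qpow_Sn_in_01 k). assert (h5 := qpow_Sn_in_01 (n - S k)).
      simpl in h4, h5. field. repeat split; lra.
Qed.

Definition qdelta (n : nat) (f : nat -> R) : R :=
  sum_f_R0 (fun i => qbinom n i * (-1) ^ i * q ^ binom2 i * f i) n.

Lemma qdelta_pow (n : nat) (x : R) : qdelta n (fun i => x ^ i) = qpoch x q n.
Proof.
  revert x; induction n as [|n IHn]; intro x.
  - unfold qdelta. simpl. unfold binom2. simpl. ring.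
  - rewrite qpoch_S_front, <- IHn. unfold qdelta.
    set (g := fun i => qbinom n i * (-1) ^ i * q ^ binom2 i * (q * x) ^ i).
    assert (hshift : sum_f_R0 (fun j => g (S j)) n = sum_f_R0 g n - 1).
    { assert (h := decomp_sum g (S n) (Nat.lt_0_succ n)). simpl pred in h.
      assert (htop : g (S n) = 0) by (unfold g; rewrite qbinom_gt by lia; ring).
      change (sum_f_R0 g (S n)) with (sum_f_R0 g n + g (S n)) in h.
      replace (g 0%nat) with 1 in h by (unfold g; rewrite qbinom_n0; simpl; ring).
      lra. }
    rewrite decomp_sum by lia. simpl pred.
    rewrite (sum_eq _ (fun j => g (S j) - g j * x)).
    2:{ intros j _. unfold g. simpl qbinom. rewrite binom2_S, pow_add, !Rpow_mult_distr.
        simpl. ring. }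
    rewrite minus_sum, <- scal_sum, hshift. simpl. ring.
Qed.

Lemma qdelta_qinv_pow (n c : nat) : qdelta n (fun i => ((/ q) ^ i) ^ c) = qpoch ((/ q) ^ c) q n.
Proof.
  rewrite <- qdelta_pow. unfold qdelta. apply sum_eq. intros i _.
  rewrite <- !pow_mult, Nat.mul_comm. reflexivity.
Qed.

Lemma qdelta_qpoch_S (n c b : nat) (a : R) :
  qdelta n (fun i => ((/ q) ^ i) ^ c * qpoch (a * (/ q) ^ i) q (S b)) =
  qdelta n (fun i => ((/ q) ^ i) ^ c * qpoch (a * (/ q) ^ i) q b)
  - a * q ^ b * qdelta n (fun i => ((/ q) ^ i) ^ S c * qpoch (a * (/ q) ^ i) q b).
Proof.
  unfold qdelta. rewrite scal_sum, <- minus_sum.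
  apply sum_eq. intros i _. simpl. ring.
Qed.

Lemma qdelta_qpoch_low (n b : nat) (a : R) : forall c, (c + b < n)%nat ->
  qdelta n (fun i => ((/ q) ^ i) ^ c * qpoch (a * (/ q) ^ i) q b) = 0.
Proof.
  induction b as [|b IHb]; intros c hc.
  - transitivity (qdelta n (fun i => ((/ q) ^ i) ^ c)).
    { unfold qdelta. apply sum_eq. intros i _. simpl. ring. }
    rewrite qdelta_qinv_pow. apply (qpoch_root _ _ _ c); [lia|].
    rewrite Rmult_comm. apply qpow_qinv.
  - rewrite qdelta_qpoch_S, !IHb by lia. ring.
Qed.

Lemma qdelta_qpoch_top (n b : nat) (a : R) : forall c, (c + b = n)%nat ->
  qdelta n (fun i => ((/ q) ^ i) ^ c * qpoch (a * (/ q) ^ i) q b) =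
  (-1) ^ b * a ^ b * q ^ binom2 b * qpoch ((/ q) ^ n) q n.
Proof.
  induction b as [|b IHb]; intros c hc.
  - replace c with n by lia. rewrite <- qdelta_qinv_pow.
    unfold qdelta. rewrite scal_sum. apply sum_eq. intros i _. simpl. ring.
  - rewrite qdelta_qpoch_S, qdelta_qpoch_low, IHb by lia.
    rewrite binom2_S, pow_add. simpl. ring.
Qed.

Lemma qpoch_qinv_pow (n : nat) : q ^ binom2 (S n) * qpoch ((/ q) ^ n) q n = (-1) ^ n * qpoch q q n.
Proof.
  induction n as [|n IHn]; [simpl; ring|].
  rewrite qpoch_S_front, binom2_S, pow_add.
  replace (q * (/ q) ^ S n) with ((/ q) ^ n) by (simpl; field; lra).
  transitivity ((q ^ S n - q ^ S n * (/ q) ^ S n) * (q ^ binom2 (S n) * qpoch ((/ q) ^ n) q n)).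
  { ring. }
  rewrite IHn, qpow_qinv. simpl. ring.
Qed.

Definition hcoef (m n i : nat) : R :=
  qbin q m i * qbin q n i * (-1) ^ i * q ^ binom2 i * qpoch q q i.

Definition hsum (m n b : nat) : R :=
  sum_f_R0 (fun i => hcoef m n i * qpoch q q (m + b - i)) (Nat.min m n).

(* [(q;q)_(m+b-i) = (q;q)_(m-i) (q^(m+1) q^-i; q)_b], and the last factor vanishes for
   [m < i <= m + b]. *)
Lemma hsum_qdelta (m n b : nat) : (n <= m + b)%nat ->
  hsum m n b = qpoch q q m * qdelta n (fun i => ((/ q) ^ i) ^ 0 * qpoch (q ^ S m * (/ q) ^ i) q b).
Proof.
  intros hb. unfold hsum, qdelta.
  rewrite (sum_f_R0_extend _ (Nat.min m n) n).
  3:{ intros i hi. rewrite (qpoch_root _ _ _ (i - S m)); [ring | lia |].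
      assert (e : q ^ i = q ^ S m * q ^ (i - S m)) by (rewrite <- pow_add; f_equal; lia).
      rewrite <- (qpow_qinv i), e. ring. }
  2:{ lia. }
  rewrite scal_sum. apply sum_eq. intros i hi.
  assert (him : (i <= m)%nat) by lia. assert (hin : (i <= n)%nat) by lia.
  replace (m + b - i)%nat with (m - i + b)%nat by lia.
  rewrite qpoch_add, qbinom_qbin by lia.
  replace (q * q ^ (m - i)) with (q ^ S m * (/ q) ^ i).
  2:{ replace (S m) with (S (m - i) + i)%nat by lia.
      rewrite pow_add, Rmult_assoc, qpow_qinv. simpl. ring. }
  unfold hcoef, qbin.
  assert (h1 := qpoch_q_pos m). assert (h2 := qpoch_q_pos i).
  assert (h3 := qpoch_q_pos (m - i)). assert (h4 := qpoch_q_pos (n - i)).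
  simpl. field. repeat split; lra.
Qed.

Lemma hsum_val (m n b : nat) : (b <= n)%nat -> (n <= m + b)%nat ->
  hsum m n b = if Nat.eqb b n then q ^ (m * n) * qpoch q q m * qpoch q q n else 0.
Proof.
  intros hbn hnb. rewrite hsum_qdelta by assumption.
  destruct (Nat.eqb_spec b n) as [->|hne].
  - rewrite qdelta_qpoch_top by lia.
    transitivity (q ^ (m * n) * qpoch q q m * ((-1) ^ n * (q ^ binom2 (S n) * qpoch ((/ q) ^ n) q n))).
    { rewrite binom2_S, !pow_add, <- pow_mult. simpl. rewrite Nat.mul_comm. simpl.
      rewrite pow_add. ring. }
    rewrite qpoch_qinv_pow.
    replace ((-1) ^ n * ((-1) ^ n * qpoch q q n)) with ((-1 * -1) ^ n * qpoch q q n)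
      by (rewrite Rpow_mult_distr; ring).
    replace (-1 * -1) with 1 by ring. rewrite pow1. ring.
  - rewrite qdelta_qpoch_low by lia. ring.
Qed.

Definition hgram (m n s t : nat) : R :=
  sum_f_R0 (fun i => sum_f_R0 (fun j =>
      hcoef m n i * hcoef s t j * qpoch q q (m + t - i - j)) (Nat.min s t)) (Nat.min m n).

Lemma hcoef_0 (m n : nat) : hcoef m n 0 = 1.
Proof. unfold hcoef. rewrite !qbin_0. simpl. ring. Qed.

Lemma hgram_le (m n s t : nat) : (t <= n)%nat -> (m + t = n + s)%nat ->
  hgram m n s t = q ^ (m * n) * qpoch q q m * qpoch q q n * kron m s * kron n t.
Proof.
  intros htn hmt. unfold hgram. rewrite sum_f_R0_swap.
  rewrite (sum_eq _ (fun j => hcoef s t j * hsum m n (t - j))).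
  2:{ intros j hj. unfold hsum. rewrite scal_sum. apply sum_eq. intros i _.
      replace (m + (t - j) - i)%nat with (m + t - i - j)%nat by lia. ring. }
  rewrite (sum_f_R0_extend _ 0 (Nat.min s t)).
  3:{ intros j hj. rewrite hsum_val by lia.
      destruct (Nat.eqb_spec (t - j) n); [lia | ring]. }
  2:{ lia. }
  simpl. rewrite hcoef_0, Nat.sub_0_r, hsum_val by lia.
  unfold kron. destruct (Nat.eqb_spec t n) as [->|hne].
  - replace s with m by lia. rewrite !Nat.eqb_refl. ring.
  - destruct (Nat.eqb_spec n t); [lia | ring].
Qed.

Lemma hgram_sym (m n s t : nat) : (m + t = n + s)%nat -> hgram m n s t = hgram s t m n.
Proof.
  intros h. unfold hgram. rewrite sum_f_R0_swap. apply sum_eq. intros j _.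
  apply sum_eq. intros i _.
  replace (s + n - j - i)%nat with (m + t - i - j)%nat by lia. ring.
Qed.

Lemma hgram_val (m n s t : nat) : (m + t = n + s)%nat ->
  hgram m n s t = q ^ (m * n) * qpoch q q m * qpoch q q n * kron m s * kron n t.
Proof.
  intros h. destruct (Nat.le_gt_cases t n).
  - now apply hgram_le.
  - rewrite hgram_sym, hgram_le by lia.
    unfold kron. destruct (Nat.eqb_spec t n), (Nat.eqb_spec n t); try lia. ring.
Qed.

End QCalculus.

Section QExponential.
Variable q : R.
Hypothesis hq0 : 0 < q.
Hypothesis hq1 : q < 1.

Definition qexp_term (x : R) (k : nat) : R := x ^ k / qpoch q q k.

Definition qexp (x : R) : R := Series (qexp_term x).

Lemma qexp_term_pos (x : R) (k : nat) : 0 < x -> 0 < qexp_term x k.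
Proof. intros hx. apply Rdiv_lt_0_compat; [apply pow_lt; lra | apply qpoch_q_pos; lra]. Qed.

Lemma ex_series_qexp (x : R) : 0 < x < 1 -> ex_series (qexp_term x).
Proof.
  intros hx. apply ex_series_Rabs, (ex_series_DAlembert _ x); [lra| |].
  - intro n. apply Rgt_not_eq, qexp_term_pos. lra.
  - apply is_lim_seq_ext with (fun n => x / (1 - q * q ^ n)).
    + intro n. unfold qexp_term. simpl.
      assert (h1 := qpoch_q_pos q hq0 hq1 n). assert (h2 := qpow_Sn_in_01 q hq0 hq1 n).
      assert (0 < x ^ n) by (apply pow_lt; lra).
      simpl in h2. rewrite Rabs_pos_eq.
      * field. split; lra.
      * apply Rlt_le. apply Rdiv_lt_0_compat; apply Rdiv_lt_0_compat; nra.
    + replace (Finite x) with (Rbar_div x (1 - q * 0)) by (simpl; f_equal; field).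
      apply is_lim_seq_div'; [apply is_lim_seq_const | | lra].
      apply is_lim_seq_minus'; [apply is_lim_seq_const|].
      apply (is_lim_seq_mult' (fun _ => q)); [apply is_lim_seq_const|].
      apply is_lim_seq_geom. rewrite Rabs_pos_eq; lra.
Qed.

Lemma is_series_qexp (x : R) : 0 < x < 1 -> is_series (qexp_term x) (qexp x).
Proof. intros hx. apply Series_correct, ex_series_qexp, hx. Qed.

(* Term by term, [qexp x - qexp (q x)] is the series of [x qexp x] shifted by one index. *)
Lemma qexp_qmul (x : R) : 0 < x < 1 -> qexp (q * x) = (1 - x) * qexp x.
Proof.
  intros hx.
  assert (hqx : 0 < q * x < 1) by nra.
  assert (hdiff : is_series (fun k => x * qexp_term x k) (qexp x - qexp (q * x))).
  { apply is_series_ext with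
      (fun k => (fun j => plus (qexp_term x j) (opp (qexp_term (q * x) j))) (S k)).
    - intro k. unfold plus, opp, qexp_term; simpl.
      assert (h1 := qpoch_q_pos q hq0 hq1 k). assert (h2 := qpow_Sn_in_01 q hq0 hq1 k).
      simpl in h2. rewrite Rpow_mult_distr. field. split; lra.
    - apply (is_series_incr_1 (fun j => plus (qexp_term x j) (opp (qexp_term (q * x) j)))).
      assert (h0 : plus (qexp_term x 0) (opp (qexp_term (q * x) 0)) = zero)
        by (unfold plus, opp, zero, qexp_term; simpl; field).
      rewrite h0, plus_zero_r.
      exact (is_series_minus _ _ _ _ (is_series_qexp x hx) (is_series_qexp _ hqx)). }
  apply is_series_unique in hdiff.
  rewrite Series_scal_l in hdiff. fold (qexp x) in hdiff. lra.
Qed.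

Lemma qexp_qpow (n : nat) : qexp (q ^ S n) = qexp q * qpoch q q n.
Proof.
  induction n as [|n IHn]; [simpl; rewrite Rmult_1_r; ring|].
  change (q ^ S (S n)) with (q * q ^ S n).
  rewrite qexp_qmul, IHn by (apply qpow_Sn_in_01; assumption). simpl. ring.
Qed.

Lemma qexp_tail (x : R) : 0 < x < 1 -> qexp x = 1 + Series (fun k => qexp_term x (S k)).
Proof.
  intros hx. unfold qexp. rewrite Series_incr_1 by (apply ex_series_qexp, hx).
  unfold qexp_term at 1. simpl. field.
Qed.

(* The tail of [qexp (q^(n+1))] is dominated termwise by [q^n] times the tail of [qexp q]. *)
Lemma qexp_qpow_bounds (n : nat) : 1 <= qexp (q ^ S n) <= 1 + q ^ n * (qexp q - 1).
Proof.
  assert (hx := qpow_Sn_in_01 q hq0 hq1 n).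
  assert (hq : 0 < q < 1) by lra.
  assert (hex : ex_series (fun k => qexp_term q (S k)))
    by (apply (ex_series_incr_1 (qexp_term q)), ex_series_qexp, hq).
  rewrite !qexp_tail by assumption. split.
  - assert (0 <= Series (fun k => qexp_term (q ^ S n) (S k))); [|lra].
    rewrite <- (Rmult_0_l (Series (qexp_term q))), <- Series_scal_l.
    apply Series_le.
    + intro k. rewrite Rmult_0_l. split; [lra | apply Rlt_le, qexp_term_pos; lra].
    + apply (ex_series_incr_1 (qexp_term (q ^ S n))), ex_series_qexp, hx.
  - enough (Series (fun k => qexp_term (q ^ S n) (S k)) <= q ^ n * Series (fun k => qexp_term q (S k)))
      by lra.
    rewrite <- Series_scal_l. apply Series_le.
    + intro k. split; [apply Rlt_le, qexp_term_pos; lra|].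
      unfold qexp_term. unfold Rdiv. rewrite <- Rmult_assoc.
      apply Rmult_le_compat_r; [apply Rlt_le, Rinv_0_lt_compat, qpoch_q_pos; assumption|].
      assert (h1 := qpow_pos_le1 q hq0 hq1 n). assert (h2 := qpow_pos_le1 q hq0 hq1 k).
      assert (h3 : (q ^ S n) ^ k <= q ^ k) by (apply pow_incr; simpl; nra).
      assert (h4 : 0 <= (q ^ S n) ^ k) by (apply pow_le; lra).
      simpl in h3, h4 |- *.
      replace (q ^ n * (q * q ^ k)) with (q * q ^ n * q ^ k) by ring.
      apply Rmult_le_compat_l; nra.
    + apply (ex_series_scal_l (q ^ n) (fun k => qexp_term q (S k))), hex.
Qed.

Lemma qexp_q_ge1 : 1 <= qexp q.
Proof. assert (h := qexp_qpow_bounds 0). simpl in h. rewrite Rmult_1_r in h. lra. Qed.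

(* [(q;q)_n = qexp (q^(n+1)) / qexp q], and [qexp (q^(n+1))] is squeezed to [1]. *)
Lemma qpoch_inf_qexp : qpoch_inf q (/ qexp q).
Proof.
  assert (hF := qexp_q_ge1). apply is_lim_seq_Reals.
  apply is_lim_seq_ext with (fun n => qexp (q ^ S n) / qexp q).
  { intro n. rewrite qexp_qpow. field. lra. }
  replace (/ qexp q) with (1 / qexp q) by (field; lra).
  apply (is_lim_seq_div' _ (fun _ => qexp q) 1 (qexp q)); [| apply is_lim_seq_const | lra].
  apply is_lim_seq_le_le with (fun _ => 1) (fun n => 1 + q ^ n * (qexp q - 1)).
  - apply qexp_qpow_bounds.
  - apply is_lim_seq_const.
  - replace (Finite 1) with (Finite (1 + 0 * (qexp q - 1))) by (f_equal; ring).
    apply is_lim_seq_plus'; [apply is_lim_seq_const|].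
    apply is_lim_seq_mult'; [|apply is_lim_seq_const].
    apply is_lim_seq_geom. rewrite Rabs_pos_eq; lra.
Qed.

End QExponential.

Definition polar (r th : R) : C := (r * cos th, r * sin th).

Lemma zpt_polar (q : R) (k : nat) (th : R) : zpt q k th = polar (Rpower q (INR k / 2)) th.
Proof. reflexivity. Qed.

Lemma polar_0 (r : R) : polar r 0 = (r, 0).
Proof. unfold polar. rewrite cos_0, sin_0. f_equal; ring. Qed.

Lemma Cmul_polar (r1 r2 a b : R) : Cmul (polar r1 a) (polar r2 b) = polar (r1 * r2) (a + b).
Proof. unfold Cmul, polar; simpl. rewrite cos_plus, sin_plus. f_equal; ring. Qed.

Lemma Cconj_polar (r th : R) : Cconj (polar r th) = polar r (- th).
Proof. unfold Cconj, polar; simpl. rewrite cos_neg, sin_neg. f_equal; ring. Qed.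

Lemma Cscale_polar (c r th : R) : Cscale c (polar r th) = polar (c * r) th.
Proof. unfold Cscale, polar; simpl. f_equal; ring. Qed.

Lemma Cpow_polar (r th : R) (a : nat) : Cpow (polar r th) a = polar (r ^ a) (INR a * th).
Proof.
  induction a as [|a IHa].
  - simpl. rewrite Rmult_0_l, polar_0. reflexivity.
  - simpl Cpow. rewrite IHa, Cmul_polar, S_INR. f_equal; simpl; ring.
Qed.

Lemma Csum_polar (g : nat -> C) (f : nat -> R) (th : R) (N : nat) :
  (forall k, (k <= N)%nat -> g k = polar (f k) th) -> Csum g N = polar (sum_f_R0 f N) th.
Proof.
  induction N as [|N IHN]; intros h; simpl; [apply h; lia|].
  rewrite IHN, h by (lia || intros k hk; apply h; lia).
  unfold Cadd, polar; simpl. f_equal; ring.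
Qed.

Definition hradial (q : R) (m n : nat) (r : R) : R :=
  sum_f_R0 (fun i => hcoef q m n i * (r ^ (m - i) * r ^ (n - i))) (Nat.min m n).

Lemma qHermite2D_polar (q : R) (m n : nat) (r th : R) :
  qHermite2D q m n (polar r th) (Cconj (polar r th)) =
  polar (hradial q m n r) ((INR m - INR n) * th).
Proof.
  unfold qHermite2D, hradial. apply Csum_polar. intros i hi.
  rewrite Cconj_polar, !Cpow_polar, Cmul_polar, Cscale_polar, !minus_INR by lia.
  f_equal. ring.
Qed.

Lemma qHermite2D_product_polar (q : R) (m n s t : nat) (r th : R) :
  Cmul (qHermite2D q m n (polar r th) (Cconj (polar r th)))
       (Cconj (qHermite2D q s t (polar r th) (Cconj (polar r th)))) =
  polar (hradial q m n r * hradial q s t r) ((INR m - INR n - (INR s - INR t)) * th).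
Proof. rewrite !qHermite2D_polar, Cconj_polar, Cmul_polar. f_equal. ring. Qed.

Lemma sin_2PI_IZR (z : Z) : sin (2 * PI * IZR z) = 0.
Proof. apply sin_eq_0_1. exists (2 * z)%Z. rewrite mult_IZR. simpl. ring. Qed.

Lemma cos_2PI_IZR (z : Z) : cos (2 * PI * IZR z) = 1.
Proof.
  replace (2 * PI * IZR z) with (2 * (IZR z * PI)) by ring.
  rewrite cos_2a_sin, sin_eq_0_1 by (exists z; reflexivity). ring.
Qed.

Lemma angular_mean_is_RInt (f g : R -> R) (vf vg : R) :
  is_RInt f 0 (2 * PI) vf -> is_RInt g 0 (2 * PI) vg ->
  angular_mean (fun th => (f th, g th)) (vf / (2 * PI), vg / (2 * PI)).
Proof.
  intros hf hg.
  exists (ex_RInt_Reals_0 _ _ _ (ex_intro _ _ hf)), (ex_RInt_Reals_0 _ _ _ (ex_intro _ _ hg)).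
  rewrite <- (RInt_Reals f), <- (RInt_Reals g), (is_RInt_unique _ _ _ _ hf),
    (is_RInt_unique _ _ _ _ hg).
  reflexivity.
Qed.

Lemma angular_mean_const (v : C) : angular_mean (fun _ => v) v.
Proof.
  destruct v as [a b].
  assert (h := angular_mean_is_RInt (fun _ => a) (fun _ => b) _ _
                 (is_RInt_const 0 (2 * PI) a) (is_RInt_const 0 (2 * PI) b)).
  unfold scal in h; simpl in h; unfold mult in h; simpl in h.
  replace ((2 * PI - 0) * a / (2 * PI)) with a in h by (field; apply PI_neq0).
  replace ((2 * PI - 0) * b / (2 * PI)) with b in h by (field; apply PI_neq0).
  exact h.
Qed.

Lemma angular_mean_wave (P : R) (z : Z) : z <> 0%Z ->
  angular_mean (fun th => polar P (IZR z * th)) (0, 0).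
Proof.
  intros hz. apply not_0_IZR in hz.
  replace (0, 0) with (0 / (2 * PI), 0 / (2 * PI)) by (f_equal; field; apply PI_neq0).
  apply angular_mean_is_RInt.
  - assert (h : is_RInt (fun th => P * cos (IZR z * th)) 0 (2 * PI)
                  (minus (P * sin (IZR z * (2 * PI)) / IZR z) (P * sin (IZR z * 0) / IZR z))).
    { apply (is_RInt_derive (fun x => P * sin (IZR z * x) / IZR z)).
      + intros x _. auto_derive; [auto|]. field. assumption.
      + intros x _. apply (@ex_derive_continuous R_AbsRing R_NormedModule
                             (fun th => P * cos (IZR z * th))). auto_derive. auto. }
    replace (minus _ _) with 0 in h; [exact h|].
    unfold minus, plus, opp; simpl.
    rewrite Rmult_0_r, sin_0, (Rmult_comm (IZR z) (2 * PI)), sin_2PI_IZR. field. assumption.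
  - assert (h : is_RInt (fun th => P * sin (IZR z * th)) 0 (2 * PI)
                  (minus (- P * cos (IZR z * (2 * PI)) / IZR z) (- P * cos (IZR z * 0) / IZR z))).
    { apply (is_RInt_derive (fun x => - P * cos (IZR z * x) / IZR z)).
      + intros x _. auto_derive; [auto|]. field. assumption.
      + intros x _. apply (@ex_derive_continuous R_AbsRing R_NormedModule
                             (fun th => P * sin (IZR z * th))). auto_derive. auto. }
    replace (minus _ _) with 0 in h; [exact h|].
    unfold minus, plus, opp; simpl.
    rewrite Rmult_0_r, cos_0, (Rmult_comm (IZR z) (2 * PI)), cos_2PI_IZR. field. assumption.
Qed.

Lemma infinite_sum_0 (a : nat -> R) : (forall k, a k = 0) -> infinite_sum a 0.
Proof.
  intros ha eps heps. exists 0%nat. intros n _.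
  rewrite (sum_eq _ (fun _ => 0)) by (intros; apply ha).
  rewrite sum_cte. unfold R_dist. rewrite Rmult_0_l, Rminus_0_r, Rabs_R0. exact heps.
Qed.

Lemma mu_integral_radial (q v : R) (f : C -> C) (P : nat -> R) :
  (forall k th, f (zpt q k th) = (P k, 0)) ->
  infinite_sum (fun k => q ^ k / qpoch q q k * P k) v -> mu_integral q f (v, 0).
Proof.
  intros hf hP. exists (fun k => (P k, 0)). split; [|split].
  - intro k. rewrite (functional_extensionality _ _ (hf k)). apply angular_mean_const.
  - exact hP.
  - apply infinite_sum_0. intro k. apply Rmult_0_r.
Qed.

Lemma mu_integral_wave (q : R) (f : C -> C) (P : nat -> R) (z : Z) : z <> 0%Z ->
  (forall k th, f (zpt q k th) = polar (P k) (IZR z * th)) -> mu_integral q f (0, 0).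
Proof.
  intros hz hf. exists (fun _ => (0, 0)). split; [|split].
  - intro k. rewrite (functional_extensionality _ _ (hf k)). apply angular_mean_wave, hz.
  - apply infinite_sum_0. intro k. apply Rmult_0_r.
  - apply infinite_sum_0. intro k. apply Rmult_0_r.
Qed.

Lemma Rpower_half_sq (q : R) (k : nat) : 0 < q -> Rpower q (INR k / 2) ^ 2 = q ^ k.
Proof.
  intros hq. simpl. rewrite Rmult_1_r, <- Rpower_plus.
  replace (INR k / 2 + INR k / 2) with (INR k) by field. apply Rpower_pow, hq.
Qed.

(* Since [r^2 = q^k], each pair of monomials contributes [c_i c'_j qexp (q^(m+t-i-j+1))]. *)
Lemma hradial_series (q : R) (m n s t : nat) : 0 < q -> q < 1 -> (m + t = n + s)%nat ->
  infinite_sum (fun k => q ^ k / qpoch q q k *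
      (hradial q m n (Rpower q (INR k / 2)) * hradial q s t (Rpower q (INR k / 2))))
    (hgram q m n s t * qexp q q).
Proof.
  intros hq0 hq1 hmt. apply is_series_Reals.
  set (c i j := hcoef q m n i * hcoef q s t j).
  replace (hgram q m n s t * qexp q q) with (sum_f_R0 (fun i => sum_f_R0 (fun j =>
      c i j * qexp q (q ^ S (m + t - i - j))) (Nat.min s t)) (Nat.min m n)).
  2:{ unfold hgram. rewrite Rmult_comm, scal_sum. apply sum_eq. intros i _.
      rewrite Rmult_comm, scal_sum. apply sum_eq. intros j _.
      rewrite qexp_qpow by assumption. unfold c. ring. }
  apply is_series_ext with (fun k => sum_f_R0 (fun i => sum_f_R0 (fun j =>
      c i j * qexp_term q (q ^ S (m + t - i - j)) k) (Nat.min s t)) (Nat.min m n)).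
  { intro k. unfold hradial. rewrite sum_f_R0_mul, scal_sum. apply sum_eq. intros i hi.
    rewrite Rmult_comm, scal_sum. apply sum_eq. intros j hj.
    set (r := Rpower q (INR k / 2)).
    assert (hr : r ^ (m - i) * r ^ (n - i) * (r ^ (s - j) * r ^ (t - j)) =
                 (q ^ k) ^ (m + t - i - j)).
    { rewrite <- !pow_add, <- (Rpower_half_sq q k hq0), <- pow_mult. f_equal. lia. }
    assert (hq : (q ^ S (m + t - i - j)) ^ k = q ^ k * (q ^ k) ^ (m + t - i - j)).
    { rewrite <- !pow_mult, <- pow_add. f_equal. lia. }
    unfold c, qexp_term. rewrite hq, <- hr. field.
    apply Rgt_not_eq, qpoch_q_pos; assumption. }
  apply is_series_sum_f_R0. intros i _. apply is_series_sum_f_R0. intros j _.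
  exact (is_series_scal_l (c i j) _ _
           (is_series_qexp q hq0 hq1 _ (qpow_Sn_in_01 q hq0 hq1 (m + t - i - j)))).
Qed.

Theorem theorem3p3 (q : R) (hq0 : 0 < q) (hq1 : q < 1) (m n s t : nat) :
  exists qinf : R, qpoch_inf q qinf /\
    mu_integral q
      (fun z => Cmul (qHermite2D q m n z (Cconj z))
                     (Cconj (qHermite2D q s t z (Cconj z))))
      (q ^ (m * n) * qpoch q q m * qpoch q q n / qinf * kron m s * kron n t, 0).
Proof.
  exists (/ qexp q q). split; [exact (qpoch_inf_qexp q hq0 hq1)|].
  set (P k := hradial q m n (Rpower q (INR k / 2)) * hradial q s t (Rpower q (INR k / 2))).
  set (e := (Z.of_nat m - Z.of_nat n - (Z.of_nat s - Z.of_nat t))%Z).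
  assert (hpolar : forall k th,
    Cmul (qHermite2D q m n (zpt q k th) (Cconj (zpt q k th)))
         (Cconj (qHermite2D q s t (zpt q k th) (Cconj (zpt q k th)))) = polar (P k) (IZR e * th)).
  { intros k th. rewrite zpt_polar, qHermite2D_product_polar. unfold e.
    rewrite !minus_IZR, <- !INR_IZR_INZ. reflexivity. }
  destruct (Nat.eq_dec (m + t) (n + s)) as [hmt|hmt].
  - apply (mu_integral_radial _ _ _ P).
    { intros k th. rewrite hpolar. replace e with 0%Z by lia. rewrite Rmult_0_l. apply polar_0. }
    replace (q ^ (m * n) * qpoch q q m * qpoch q q n / / qexp q q * kron m s * kron n t)
      with (hgram q m n s t * qexp q q).
    { apply hradial_series; assumption. }
    assert (h1 := qexp_q_ge1 q hq0 hq1).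
    rewrite hgram_val by assumption. field. lra.
  - replace (q ^ (m * n) * qpoch q q m * qpoch q q n / / qexp q q * kron m s * kron n t) with 0.
    { apply (mu_integral_wave _ _ P e); [lia | exact hpolar]. }
    unfold kron. destruct (Nat.eqb_spec m s), (Nat.eqb_spec n t); try lia; ring.
Qed.
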